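(* Let $\Gamma$ be a finitely generated group which is stable and LEF, let $\pi:\mathbb{F}\twoheadrightarrow\Gamma$ be an epimorphism from a free group on a finite basis $X$, and let $S=\pi(X)$. Then $\Gamma$ is residually finite and for every positive integer $l$, $$\max\big\{\mathcal{L}_\Gamma^S\big(F_\Gamma^\pi(2l)\big)!,\ \mathcal{L}_\Gamma^S(l)!\big\}\ge\mathcal{R}_\Gamma^S(l).$$
   Context: For finite $\Omega$, $d_\Omega(\sigma,\tau)=|\{\omega:\sigma(\omega)\ne\tau(\omega)\}|/|\Omega|$. A pair $(\delta,E)$, $\delta\in(0,1]$, $E\subseteq\ker\pi$ finite, is valid for $\epsilon>0$ if for every finite $\Omega$ and homomorphism $\rho:\mathbb{F}\to\mathrm{Sym}(\Omega)$ with $d_\Omega(\rho(r),\mathrm{id})<\delta$ for all $r\in E$ there is a homomorphism $\phi:\Gamma\to\mathrm{Sym}(\Omega)$ with $d_\Omega(\rho(x),\phi(\pi(x)))<\epsilon$ for all $x\in X$; $\Gamma$ is stable if valid pairs exist for all $\epsilon$. $F_\Gamma^\pi(x)=\inf\{\|E\|/\delta:(\delta,E)\text{ valid for }1/x\}$, $\|E\|=\sum_{r\in E}|r|$ (word length in $X$). $B_S(t)$ is the closed ball of radius $t\ge0$ about $e$ in the word metric of $S$. A map $\psi:A\to\Delta$ from a subset $A$ of a group is a local embedding if it is injective and $\psi(gh)=\psi(g)\psi(h)$ whenever $g,h,gh\in A$. $\Gamma$ is LEF if every finite subset admits a local embedding into a finite group. $\mathcal{L}_\Gamma^S(t)$ is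 the minimal order of a finite group admitting a local embedding of $B_S(t)$. $\mathcal{R}_\Gamma^S(l)$ is the minimal order of a finite group $\Delta$ admitting a homomorphism $\Gamma\to\Delta$ injective on $B_S(l)$. *)

From HB Require Import structures.
From mathcomp Require Import all_boot all_order all_algebra all_fingroup.
From mathcomp Require Import boolp classical_sets reals.

Set Implicit Arguments. Unset Strict Implicit. Unset Printing Implicit Defensive.
Import Order.TTheory GRing.Theory Num.Theory.

(* A word over the finite basis X: a letter (x, true) stands for x,
   (x, false) for x^-1.  Elements of the free group F(X) are represented by
   their unique reduced words. *)
Definition word (X : finType) := seq (X * bool).

Definition reduced (X : finType) (w : word X) : bool :=
  ~~ has (fun p : (X * bool) * (X * bool) => (p.1.1 == p.2.1) && (p.1.2 != p.2.2))
        (zip w (behead w)).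

Definition eval_word (X : finType) (G : groupType) (s : X -> G) (w : word X) : G :=
  foldr (fun a acc => ((if a.2 then s a.1 else (s a.1)^-1) * acc)%g) 1%g w.

(* pi : F(X) -> G (determined by s) is onto *)
Definition word_surjective (X : finType) (G : groupType) (s : X -> G) : Prop :=
  forall g : G, exists w : word X, eval_word s w = g.

Definition dOmega (R : realType) (Om : finType) (sg tau : {perm Om}) : R :=
  (#|[set w | sg w != tau w]|%:R / #|Om|%:R)%R.

Definition group_hom (G H : groupType) (f : G -> H) : Prop :=
  forall x y : G, f (x * y)%g = (f x * f y)%g.

Definition normE (X : finType) (E : seq (word X)) : nat := \sum_(r <- E) size r.

(* (delta, E) is valid for eps; E is a finite subset of ker pi (reduced words,
   listed without repetition); rho : F(X) -> Sym(Omega) is given by the images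
   of the basis. *)
Definition valid_pair (R : realType) (X : finType) (G : groupType) (s : X -> G)
    (eps delta : R) (E : seq (word X)) : Prop :=
  [/\ (0 < delta <= 1)%R, uniq E, all (@reduced X) E,
      (forall r, r \in E -> eval_word s r = 1%g) &
      forall (Om : finType) (rho : X -> {perm Om}),
        (forall r, r \in E -> (dOmega R (eval_word rho r) 1%g < delta)%R) ->
        exists phi : G -> {perm Om}, group_hom phi /\
          forall x : X, (dOmega R (rho x) (phi (s x)) < eps)%R].

Definition stable (R : realType) (X : finType) (G : groupType) (s : X -> G) : Prop :=
  forall eps : R, (0 < eps)%R -> exists delta E, valid_pair s eps delta E.

Definition Fstab (R : realType) (X : finType) (G : groupType) (s : X -> G) (x : R) : R :=
  inf [set q : R | exists delta E, valid_pair s (x^-1)%R delta E /\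
                                  q = ((normE E)%:R / delta)%R].

Definition ball (R : realType) (X : finType) (G : groupType) (s : X -> G) (t : R)
  : G -> Prop :=
  fun g => exists w : word X, eval_word s w = g /\ ((size w)%:R <= t)%R.

Definition local_embedding (G H : groupType) (A : G -> Prop) (psi : G -> H) : Prop :=
  (forall g h, A g -> A h -> psi g = psi h -> g = h) /\
  (forall g h, A g -> A h -> A (g * h)%g -> psi (g * h)%g = (psi g * psi h)%g).

Definition finite_subset (G : groupType) (A : G -> Prop) : Prop :=
  exists l : seq G, forall g, A g -> g \in l.

Definition LEF (G : groupType) : Prop :=
  forall A : G -> Prop, finite_subset A ->
    exists (H : finGroupType) (psi : G -> H), local_embedding A psi.

Definition residually_finite (G : groupType) : Prop :=
  forall g : G, g != 1%g ->
    exists (H : finGroupType) (f : G -> H), group_hom f /\ f g != 1%g.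

(* least natural number satisfying P (0 if there is none) *)
Lemma min_nat_ex (P : nat -> Prop) : (exists n, P n) -> exists n, `[< P n >].
Proof. by case=> n Pn; exists n; apply/asboolP. Qed.

Definition min_nat (P : nat -> Prop) : nat :=
  match pselect (exists n, P n) with
  | left h => ex_minn (min_nat_ex h)
  | right _ => 0
  end.

Definition Lfun (R : realType) (X : finType) (G : groupType) (s : X -> G) (t : R) : nat :=
  min_nat (fun n => exists (H : finGroupType) (psi : G -> H),
             #|H| = n /\ local_embedding (ball s t) psi).

Definition Rfun (R : realType) (X : finType) (G : groupType) (s : X -> G) (l : nat) : nat :=
  min_nat (fun n => exists (H : finGroupType) (f : G -> H),
             [/\ #|H| = n, group_hom f &
                 forall g h, ball s (l%:R : R) g -> ball s (l%:R : R) h -> f g = f h -> g = h]).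

From HB Require Import structures.
From mathcomp Require Import all_boot all_order all_algebra all_fingroup.
From mathcomp Require Import boolp classical_sets reals.
Set Implicit Arguments. Unset Strict Implicit. Unset Printing Implicit Defensive.
Import Order.TTheory GRing.Theory Num.Theory.

(* Let psi embed the ball of radius t of Gamma locally into a finite group H,
   and let rho send each generator x to right multiplication by psi(x) on H.
   If t bounds the relators of a valid pair (delta, E) for eps, rho kills
   them, so stability yields a homomorphism phi : Gamma -> Sym(H) with phi(x)
   eps-close to rho(x).  Closeness adds up along words, whereas rho(u) and
   rho(v) disagree at every point of H as soon as psi(u) <> psi(v); hence for
   eps = 1/(2l) the homomorphism phi is injective on the ball of radius l.
   With t >= max(F(2l), l) and |H| = L(t) this gives R(l) <= |Sym(H)| = L(t)!,
   and choosing l with g in the ball of radius l separates g <> 1 from 1. *)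

Lemma min_natP (P : nat -> Prop) : (exists n, P n) -> P (min_nat P).
Proof. by rewrite /min_nat; case: pselect => // exP _; case: ex_minnP => n /asboolP. Qed.

Lemma min_nat_le (P : nat -> Prop) n : P n -> min_nat P <= n.
Proof.
move=> Pn; rewrite /min_nat; case: pselect => [exP|[]]; last by exists n.
by case: ex_minnP => m _; apply; apply/asboolP.
Qed.

Lemma card_perm_type (T : finType) : #|{perm T}| = (#|T|)`!.
Proof.
rewrite -cardsT -card_perm; apply: eq_card => p; rewrite !inE.
by apply/esym/fintype.subsetP => x _; rewrite inE.
Qed.

Section GroupHom.
Local Open Scope group_scope.
Variables (G H : groupType) (f : G -> H).
Hypothesis fM : group_hom f.

Lemma group_hom1 : f 1 = 1.
Proof. by apply: (@mulIg _ (f 1)); rewrite -fM !mulg1 mul1g. Qed.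

Lemma group_homV x : f x^-1 = (f x)^-1.
Proof. by apply/esym/mulg1_eq; rewrite -fM mulgV group_hom1. Qed.

Lemma eval_word_hom (X : finType) (s : X -> G) w :
  eval_word (f \o s) w = f (eval_word s w).
Proof.
elim: w => [|[x []] w IHw] /=; first by rewrite group_hom1.
  by rewrite fM IHw.
by rewrite fM IHw group_homV.
Qed.

End GroupHom.

Section Hamming.
Local Open Scope group_scope.
Variable Om : finType.
Implicit Types p q : {perm Om}.

Definition hamming p q := #|[set w | p w != q w]|.

Lemma hammingC p q : hamming p q = hamming q p.
Proof. by apply: eq_card => w; rewrite !inE eq_sym. Qed.

Lemma hammingxx p : hamming p p = 0%N.
Proof. by apply: eq_card0 => w; rewrite !inE eqxx. Qed.

Lemma hamming_triangle p q r : hamming p r <= hamming p q + hamming q r.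
Proof.
rewrite -cardsUI (leq_trans _ (leq_addr _ _)) //; apply: subset_leq_card.
by apply/fintype.subsetP => w; rewrite !inE; case: (p w =P q w) => [->|].
Qed.

Lemma hammingM p1 p2 q1 q2 :
  hamming (p1 * p2) (q1 * q2) <= hamming p1 q1 + hamming p2 q2.
Proof.
rewrite /hamming -[X in _ <= _ + X](card_preimset _ (@perm_inj _ p1)) -cardsUI.
rewrite (leq_trans _ (leq_addr _ _)) //; apply: subset_leq_card.
apply/fintype.subsetP => w; rewrite !inE !permM.
by case: (p1 w =P q1 w) => [->|]; rewrite ?orbT.
Qed.

Lemma hammingV p q : hamming p^-1 q^-1 = hamming p q.
Proof.
rewrite /hamming -[LHS](card_preimset _ (@perm_inj _ p)); apply: eq_card => w.
by rewrite !inE permK eq_sym (can2_eq (permKV q) (permK q)).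
Qed.

Lemma hamming_eval_word (X : finType) (rho tau : X -> {perm Om}) M w :
  (forall x, hamming (rho x) (tau x) <= M) ->
  hamming (eval_word rho w) (eval_word tau w) <= size w * M.
Proof.
move=> rho_tau; elim: w => [|[x b] w IHw] /=; first by rewrite hammingxx.
by rewrite mulSn (leq_trans (hammingM _ _ _ _)) // leq_add //; case: b; rewrite ?hammingV.
Qed.

Lemma dOmega_lt (R : realType) p q (eps : R) : (0 < #|Om|)%N ->
  (dOmega R p q < eps)%R -> ((hamming p q)%:R < eps * #|Om|%:R)%R.
Proof. by move=> Om_gt0; rewrite /dOmega ltr_pdivrMr ?ltr0n. Qed.

End Hamming.

Lemma hamming_rreg (H : finGroupType) (a b : H) :
  a != b -> hamming (actperm 'R a) (actperm 'R b) = #|H|.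
Proof.
move=> neq_ab; rewrite -cardsT; apply: eq_card => x; rewrite !inE !actpermE /=.
by apply: contraNN neq_ab => /eqP/mulgI->.
Qed.

Section Balls.
Local Open Scope ring_scope.
Variables (R : realType) (X : finType) (G : groupType) (s : X -> G).

Fixpoint words_upto (n : nat) : seq (word X) :=
  if n is k.+1 then [::] :: [seq a :: w | a <- enum {: X * bool}, w <- words_upto k]
  else [:: [::]].

Lemma mem_words_upto n w : (size w <= n)%N -> w \in words_upto n.
Proof.
elim: n w => [|n IHn] [|a w] //=; rewrite ?in_cons ?eqxx // => size_w.
by rewrite (allpairs_f (fun a w => a :: w)) ?orbT ?mem_enum ?IHn.
Qed.

Lemma ball_finite (t : R) : finite_subset (ball s t).
Proof.
exists [seq eval_word s w | w <- words_upto (Num.truncn t).+1].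
move=> _ [w [<- size_w]]; apply/map_f/mem_words_upto/ltnW.
by rewrite -(ltr_nat R) (le_lt_trans size_w (truncnS_gt t)).
Qed.

Lemma ball1 (t : R) : 0 <= t -> ball s t 1%g.
Proof. by exists [::]. Qed.

Lemma ball_letter (t : R) x b : 1 <= t -> ball s t (if b then s x else (s x)^-1)%g.
Proof. by exists [:: (x, b)]; rewrite /= mulg1. Qed.

End Balls.

Section LocalEmbedding.
Local Open Scope ring_scope.
Variables (R : realType) (X : finType) (G : groupType) (s : X -> G).
Variables (t : R) (H : finGroupType) (psi : G -> H).
Hypotheses (t_ge0 : 0 <= t) (psi_emb : local_embedding (ball s t) psi).

Lemma local_embedding1 : psi 1%g = 1%g.
Proof.
have B1 := ball1 s t_ge0.
have := psi_emb.2 _ _ B1 B1; rewrite mulg1 => /(_ B1) psi1M.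
by apply: (@mulIg _ (psi 1%g)); rewrite -psi1M mul1g.
Qed.

Lemma local_embeddingV g : ball s t g -> ball s t g^-1%g -> psi g^-1%g = (psi g)^-1%g.
Proof.
move=> Bg Bg'; apply/esym/mulg1_eq.
by rewrite -psi_emb.2 ?mulgV ?local_embedding1 //; apply: ball1.
Qed.

Lemma eval_word_local_embedding w :
  (size w)%:R <= t -> eval_word (psi \o s) w = psi (eval_word s w).
Proof.
elim: w => [|[x b] w IHw] /= size_w; first by rewrite local_embedding1.
have t_ge1 : 1 <= t by apply: le_trans size_w; rewrite ler1n.
have w_t : (size w)%:R <= t by apply: le_trans size_w; rewrite ler_nat.
have Bw : ball s t (eval_word s w) by exists w.
have Bxw : ball s t ((if b then s x else (s x)^-1) * eval_word s w)%g.
  by exists ((x, b) :: w).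
rewrite IHw // psi_emb.2 //; last exact: ball_letter.
congr (_ * _)%g; case: b {Bxw} => //.
apply/esym/local_embeddingV; first exact: (ball_letter s x true t_ge1).
exact: (ball_letter s x false t_ge1).
Qed.

End LocalEmbedding.

Lemma mul2r_inv2n_le1 (R : realType) (r : R) (m : nat) :
  (0 < m)%N -> (r <= m%:R -> 2 * r * (2 * m)%:R^-1 <= 1)%R.
Proof.
move=> m_gt0 le_rm; rewrite ler_pdivrMr ?mul1r ?ltr0n ?muln_gt0 //.
by rewrite natrM ler_pM2l.
Qed.

Section StableLocalEmbedding.
Local Open Scope ring_scope.
Variables (R : realType) (X : finType) (G : groupType) (s : X -> G).
Variables (eps delta : R) (E : seq (word X)).
Hypotheses (eps_gt0 : 0 < eps) (valid : valid_pair s eps delta E).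
Variables (t : R) (H : finGroupType) (psi : G -> H).
Hypotheses (t_ge0 : 0 <= t) (E_t : forall r, r \in E -> (size r)%:R <= t).
Hypothesis psi_emb : local_embedding (ball s t) psi.

Let rho x := actperm 'R (psi (s x)).

Let card_H_gt0 : (0 < #|H|)%N.
Proof. by apply/card_gt0P; exists 1%g. Qed.

Lemma eval_word_rreg w :
  (size w)%:R <= t -> eval_word rho w = actperm 'R (psi (eval_word s w)).
Proof.
move=> w_t; rewrite -(eval_word_local_embedding t_ge0 psi_emb w_t).
by rewrite -(eval_word_hom (f := actperm 'R)) // => a b; rewrite morphM ?inE.
Qed.

Lemma valid_pair_rreg :
  exists phi : G -> {perm H}, group_hom phi /\
    forall x, (hamming (rho x) (phi (s x)))%:R < eps * #|H|%:R.
Proof.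
case: valid => /andP[delta_gt0 _] _ _ E_rel /(_ H rho) [r rE|phi [phiM rho_phi]].
  rewrite eval_word_rreg ?E_t // E_rel // (local_embedding1 t_ge0 psi_emb) morph1.
  by rewrite /dOmega -/(hamming _ _) hammingxx mul0r.
by exists phi; split=> // x; apply: dOmega_lt (rho_phi x).
Qed.

Lemma card_le_hamming_words (phi : G -> {perm H}) M u v :
  group_hom phi -> (forall x, hamming (rho x) (phi (s x)) <= M)%N ->
  (size u)%:R <= t -> (size v)%:R <= t ->
  psi (eval_word s u) != psi (eval_word s v) -> phi (eval_word s u) = phi (eval_word s v) ->
  (#|H| <= (size u + size v) * M)%N.
Proof.
move=> phiM rho_phi_M u_t v_t psi_neq phi_uv.
rewrite -(hamming_rreg psi_neq) -(eval_word_rreg u_t) -(eval_word_rreg v_t).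
rewrite (leq_trans (hamming_triangle _ (phi (eval_word s u)) _)) // mulnDl.
rewrite [X in (_ + X <= _)%N]hammingC [in X in (_ + X <= _)%N]phi_uv.
by apply: leq_add; rewrite -(eval_word_hom phiM); apply: hamming_eval_word.
Qed.

Lemma valid_pair_injective_ball (r : R) :
  r <= t -> 2 * r * eps <= 1 ->
  exists phi : G -> {perm H}, group_hom phi /\
    forall g h, ball s r g -> ball s r h -> phi g = phi h -> g = h.
Proof.
move=> le_rt r_eps; have [phi [phiM rho_phi]] := valid_pair_rreg.
exists phi; split=> // _ _ [u [<- u_r]] [v [<- v_r]] phi_uv.
have [u_t v_t] := (le_trans u_r le_rt, le_trans v_r le_rt).
have [//|neq_uv] := eqVneq (eval_word s u) (eval_word s v); exfalso.
have psi_neq : psi (eval_word s u) != psi (eval_word s v).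
  by apply: contra_neq neq_uv; apply: psi_emb.1; [exists u | exists v].
pose M := (\max_x hamming (rho x) (phi (s x)))%N.
have M_lt : M%:R < eps * #|H|%:R.
  rewrite /M; elim/big_ind: _ => [|a b a_lt b_lt|x _]; last exact: rho_phi.
    by rewrite mulr_gt0 ?ltr0n.
  by rewrite /maxn; case: ifP.
have H_le := card_le_hamming_words phiM (fun x => leq_bigmax x) u_t v_t psi_neq phi_uv.
have uv_r : (size u + size v)%:R <= 2 * r by rewrite natrD mulr_natl mulr2n lerD.
have uv_gt0 : (0 < size u + size v)%N.
  by rewrite lt0n; apply: contraTneq H_le => ->; rewrite mul0n -ltnNge.
suff : #|H|%:R < #|H|%:R :> R by rewrite ltxx.
apply: (@le_lt_trans _ _ ((size u + size v)%:R * M%:R)); first by rewrite -natrM ler_nat.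
apply: (@lt_le_trans _ _ ((size u + size v)%:R * (eps * #|H|%:R))).
  by rewrite ltr_pM2l ?ltr0n.
rewrite mulrA -[leRHS]mul1r ler_pM2r ?ltr0n //.
by apply: le_trans r_eps; rewrite ler_pM2r.
Qed.

End StableLocalEmbedding.

Lemma size_le_normE (X : finType) (E : seq (word X)) r : r \in E -> size r <= normE E.
Proof. by move=> rE; rewrite /normE (big_rem r) //= leq_addr. Qed.

Lemma Lfun_spec (R : realType) (X : finType) (G : groupType) (s : X -> G) (t : R) :
  LEF G -> exists (H : finGroupType) (psi : G -> H),
    #|H| = Lfun s t /\ local_embedding (ball s t) psi.
Proof.
move=> lef; apply: (@min_natP (fun n => exists (H : finGroupType) (psi : G -> H),
  #|H| = n /\ local_embedding (ball s t) psi)).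
by have [H [psi psi_emb]] := lef _ (ball_finite s t); exists #|H|, H, psi.
Qed.

Lemma Rfun_le (R : realType) (X : finType) (G : groupType) (s : X -> G) (l : nat)
    (H : finGroupType) (f : G -> H) :
  group_hom f ->
  (forall g h, ball s (l%:R : R) g -> ball s (l%:R : R) h -> f g = f h -> g = h) ->
  Rfun R s l <= #|H|.
Proof. by move=> fM f_inj; apply: min_nat_le; exists H, f. Qed.

Section StableLEF.
Local Open Scope ring_scope.
Variables (R : realType) (X : finType) (G : groupType) (s : X -> G).
Hypotheses (stab : stable R s) (lef : LEF G).

Lemma Fstab_valid_pair (x : R) : 0 < x ->
  exists delta E, valid_pair s x^-1 delta E /\ (normE E)%:R <= Fstab s x.
Proof.
move=> x_gt0; have eps_gt0 : 0 < x^-1 by rewrite invr_gt0.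
pose P m := exists delta E, valid_pair s x^-1 delta E /\ normE E = m.
have [delta0 [E0 valid0]] := stab eps_gt0.
have exP : exists m, P m by exists (normE E0), delta0, E0.
have [delta [E [valid normE_min]]] := min_natP exP.
exists delta, E; split=> //; rewrite normE_min; apply: lb_le_inf.
  by exists ((normE E0)%:R / delta0), delta0, E0.
move=> _ [d [F [validF ->]]]; case: (validF) => /andP[d_gt0 d_le1] _ _ _ _.
apply: (@le_trans _ _ (normE F)%:R); first by rewrite ler_nat; apply: min_nat_le; exists d, F.
by rewrite ler_pdivlMr // ler_piMr.
Qed.

Lemma stable_LEF_residually_finite : word_surjective s -> residually_finite G.
Proof.
move=> surj g g_neq1; have [w w_g] := surj g; set n := size w.
have eps_gt0 : 0 < (2 * n.+1)%:R^-1 :> R by rewrite invr_gt0 ltr0n.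
have [delta [E valid]] := stab eps_gt0.
pose t : R := (n + normE E)%:R.
have E_t r : r \in E -> (size r)%:R <= t.
  by move=> rE; rewrite ler_nat (leq_trans (size_le_normE rE)) ?leq_addl.
have [H [psi psi_emb]] := lef (ball_finite s t).
have n_t : n%:R <= t by rewrite ler_nat leq_addr.
have n_eps : 2 * n%:R * (2 * n.+1)%:R^-1 <= 1 :> R by apply: mul2r_inv2n_le1; rewrite ?ler_nat.
have [phi [phiM phi_inj]] :=
  valid_pair_injective_ball eps_gt0 valid (ler0n _ _) E_t psi_emb n_t n_eps.
exists {perm H}, phi; split=> //.
apply: contra_neq g_neq1 => phi_g1; apply: phi_inj; rewrite ?group_hom1 //.
- by exists w.
- exact: ball1.
Qed.

Lemma Rfun_le_Lfun (l : nat) (t : R) : (0 < l)%N ->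
  Fstab s (2 * l)%:R <= t -> l%:R <= t -> (Rfun R s l <= (Lfun s t)`!)%N.
Proof.
move=> l_gt0 F_t l_t; have t_ge0 : 0 <= t := le_trans (ler0n _ _) l_t.
have l2_gt0 : 0 < (2 * l)%:R :> R by rewrite ltr0n muln_gt0.
have [delta [E [valid normE_F]]] := Fstab_valid_pair l2_gt0.
have eps_gt0 : 0 < (2 * l)%:R^-1 :> R by rewrite invr_gt0.
have E_t r : r \in E -> (size r)%:R <= t.
  move=> rE; rewrite (le_trans _ F_t) // (le_trans _ normE_F) //.
  by rewrite ler_nat size_le_normE.
have [H [psi [<- psi_emb]]] := Lfun_spec s t lef.
have [phi [phiM phi_inj]] := valid_pair_injective_ball eps_gt0 valid t_ge0 E_t
  psi_emb l_t (mul2r_inv2n_le1 l_gt0 (lexx _)).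
by rewrite -card_perm_type; apply: Rfun_le phiM phi_inj.
Qed.

End StableLEF.

Theorem proposition2p14 (R : realType) (X : finType) (G : groupType) (s : X -> G) :
  word_surjective s -> stable R s -> LEF G ->
  residually_finite G /\
  forall l : nat, 0 < l ->
    Rfun R s l <= maxn (Lfun s (Fstab s ((2 * l)%:R : R)))`! (Lfun s (l%:R : R))`!.
Proof.
move=> surj stab lef; split; first exact: stable_LEF_residually_finite stab lef surj.
move=> l l_gt0; have [F_le_l|l_lt_F] := leP (Fstab s ((2 * l)%:R : R)) (l%:R : R)%R.
- by apply: (leq_trans _ (leq_maxr _ _)); apply: Rfun_le_Lfun.
- by apply: (leq_trans _ (leq_maxl _ _)); apply: Rfun_le_Lfun => //; apply: ltW.
Qed.
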